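(* Let $\Pi$ be a cGAP such that no predicate symbol appearing in the head of its VC rule appears in the head of any GAP rule of $\Pi$, and let $S$ be a state for $\Pi$. Then $\mathcal{MM}(\Pi_S)$ is a coherent model of $\Pi$.
   Context: Fix disjoint sets of unary vertex predicate symbols and binary edge predicate symbols; constants are the vertices of a finite social network. An annotation is an element of $[0,1]$, an annotation variable (ranging over $[0,1]$), or $f(t_1,\dots,t_k)$ for an annotation function symbol $f$ denoting a fixed function $[0,1]^k\to[0,1]$ and annotations $t_i$. An annotated atom is $A:\mu$ with $A$ an atom and $\mu$ an annotation; an annotated (GAP) rule has the form $A_0:f(\mu_1,\dots,\mu_n)\leftarrow A_1:\mu_1,\dots,A_n:\mu_n$ ($n=0$: a fact); a GAP is a finite set of such rules. A vertex choice (VC) rule of size $m$ is $b_1(X),\dots,b_m(X)\hookleftarrow a_1(X),\dots,a_m(X)$ with $a_i,b_i$ vertex predicate symbols; its ground instance for vertex $v$ is $b_1(v),\dots,b_m(v)\hookleftarrow a_1(v),\dots,a_m(v)$. A choice GAP (cGAP) $\Pi$ is a finite set of annotated rules plus exactly one VC rule. An interpretation is a map $I$ from ground atoms to $[0,1]$, ordered pointwise ($I_1\preceq I_2$ iff $I_1(A)\le I_2(A)$ for all $A$). $I\models A:\mu$ iff $I(A)\ge\mu$; $I$ satisfies a ground annotated rule iff $I(A_0)$ is at least the head annotation or some body annotated atom is not satisfied; $I$ satisfies a ground VC rule $B_1,\dots,B_m\hookleftarrow A_1,\dots,A_m$ iff there is $i$ with $I(B_i)=I(A_i)$ and $I(B_j)=0$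 for all $j\neq i$; a non-ground rule is satisfied iff all its ground instances are; a model of $\Pi$ satisfies all its rules. Every GAP $P$ has a unique $\preceq$-minimal model, denoted $\mathcal{MM}(P)$. Coherence transform: for an interpretation $I$, ${\rm coh}(\Pi,I)$ is the GAP consisting of all ground non-VC rules of $\Pi$ together with, for each ground VC-rule instance $B_1(v),\dots,B_m(v)\hookleftarrow A_1(v),\dots,A_m(v)$ and each $i$ with $I(A_i(v))>0$ and $I(A_i(v))=I(B_i(v))$, the rule $B_i(v):\mu\leftarrow A_i(v):\mu$. A model $M$ of $\Pi$ is coherent iff $M=\mathcal{MM}({\rm coh}(\Pi,M))$. Game view: each vertex $v$ is a player $\mathcal P_v$ with action set $Q=\{1,\dots,m\}$ ($m$ the size of the VC rule); a state is a map $S$ from players to $Q$. The induced ground GAP $\Pi_S$ is obtained from the grounding of $\Pi$ by replacing each ground VC-rule instance $b_1(v),\dots,b_m(v)\hookleftarrow a_1(v),\dots,a_m(v)$ by the annotated rule $b_i(v):\mu\leftarrow a_i(v):\mu$ with $i=S(\mathcal P_v)$, keeping all ground non-VC rules. *)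

From Stdlib Require Import Reals List ClassicalEpsilon.
Import ListNotations.
Open Scope R_scope.

Set Implicit Arguments.

Definition in01 (x : R) : Prop := 0 <= x <= 1.

Section CGAP.

(* V  : vertices (constants) of the social network
   VP : unary vertex predicate symbols
   EP : binary edge predicate symbols (disjoint from VP: separate type)
   F  : annotation function symbols, den f = the fixed function denoted by f *)
Variables (V VP EP F : Type) (den : F -> list R -> R).

Inductive term : Type :=
| TVar (n : nat)
| TCst (v : V).

Inductive atom : Type :=
| AVtx (p : VP) (t : term)
| AEdg (e : EP) (t1 t2 : term).

Inductive gatom : Type :=
| GVtx (p : VP) (v : V)
| GEdg (e : EP) (u v : V).

Inductive ann : Type :=
| AConst (c : R) (Hc : in01 c)
| AVarA (n : nat)
| AFun (f : F) (args : list ann).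

Arguments AConst : clear implicits.

Fixpoint eval_ann (th : nat -> R) (a : ann) : R :=
  match a with
  | AConst c _ => c
  | AVarA n => th n
  | AFun f args => den f (map (eval_ann th) args)
  end.

Record rule : Type := Rule {
  r_head : atom;
  r_hann : ann;
  r_body : list (atom * ann) }.

(** Object-ground annotated rule (annotation variables are instantiated
    at satisfaction time, ranging over [0,1]). *)
Record grule : Type := GRule {
  g_head : gatom;
  g_hann : ann;
  g_body : list (gatom * ann) }.

Definition ggap := grule -> Prop.

Definition inst_term (s : nat -> V) (t : term) : V :=
  match t with TVar n => s n | TCst v => v end.

Definition inst_atom (s : nat -> V) (A : atom) : gatom :=
  match A with
  | AVtx p t => GVtx p (inst_term s t)
  | AEdg e t1 t2 => GEdg e (inst_term s t1) (inst_term s t2)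
  end.

Definition inst_rule (s : nat -> V) (r : rule) : grule :=
  GRule (inst_atom s (r_head r)) (r_hann r)
        (map (fun p => (inst_atom s (fst p), snd p)) (r_body r)).

(** Choice GAP: finitely many annotated rules plus exactly one VC rule
    b_1(X),...,b_m(X) <-' a_1(X),...,a_m(X), stored as [(b_1,a_1);...;(b_m,a_m)]. *)
Record cgap : Type := CGap {
  c_rules : list rule;
  c_vc : list (VP * VP) }.

Definition interp := gatom -> R.
Definition is_interp (I : interp) : Prop := forall A, in01 (I A).

Definition sat_grule (I : interp) (r : grule) : Prop :=
  forall th : nat -> R, (forall n, in01 (th n)) ->
    (forall Am, In Am (g_body r) -> I (fst Am) >= eval_ann th (snd Am)) ->
    I (g_head r) >= eval_ann th (g_hann r).

Definition model_gap (P : ggap) (I : interp) : Prop :=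
  is_interp I /\ forall r, P r -> sat_grule I r.

Definition least_model (P : ggap) (M : interp) : Prop :=
  model_gap P M /\ forall I, model_gap P I -> forall A, M A <= I A.

Definition MM (P : ggap) : interp :=
  epsilon (inhabits (fun _ : gatom => 0)) (least_model P).

Definition ground_rules (Pi : cgap) : ggap :=
  fun g => exists r s, In r (c_rules Pi) /\ g = inst_rule s r.

Definition vc_b (Pi : cgap) (i : nat) : option VP :=
  option_map fst (nth_error (c_vc Pi) i).

Definition copy_rule (b a : VP) (v : V) : grule :=
  GRule (GVtx b v) (AVarA 0) [(GVtx a v, AVarA 0)].

Definition sat_vc (I : interp) (Pi : cgap) (v : V) : Prop :=
  exists i ba, nth_error (c_vc Pi) i = Some ba /\
    I (GVtx (fst ba) v) = I (GVtx (snd ba) v) /\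
    forall j ba', j <> i -> nth_error (c_vc Pi) j = Some ba' ->
      I (GVtx (fst ba') v) = 0.

Definition model_cgap (Pi : cgap) (I : interp) : Prop :=
  is_interp I /\ (forall g, ground_rules Pi g -> sat_grule I g) /\
  (forall v, sat_vc I Pi v).

Definition coh (Pi : cgap) (I : interp) : ggap :=
  fun g => ground_rules Pi g \/
    exists v i ba, nth_error (c_vc Pi) i = Some ba /\
      0 < I (GVtx (snd ba) v) /\ I (GVtx (snd ba) v) = I (GVtx (fst ba) v) /\
      g = copy_rule (fst ba) (snd ba) v.

Definition coherent_model (Pi : cgap) (M : interp) : Prop :=
  model_cgap Pi M /\ M = MM (coh Pi M).

(** States: S v in {0,...,m-1} is the (0-indexed) action of player P_v. *)
Definition is_state (Pi : cgap) (S : V -> nat) : Prop :=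
  forall v, (S v < length (c_vc Pi))%nat.

Definition induced (Pi : cgap) (S : V -> nat) : ggap :=
  fun g => ground_rules Pi g \/
    exists v ba, nth_error (c_vc Pi) (S v) = Some ba /\
      g = copy_rule (fst ba) (snd ba) v.

Definition atom_vpred (A : atom) : option VP :=
  match A with AVtx p _ => Some p | AEdg _ _ _ => None end.

End CGAP.

From Stdlib Require Import Reals List Lra Lia ClassicalEpsilon FunctionalExtensionality.
Open Scope R_scope.
Set Implicit Arguments.

(** Write [M] for the least model of [Pi_S]. Every GAP has a least model, the
    pointwise infimum of its models. No GAP rule can force a VC head atom [b_j(v)]
    up, so in [M] it is [0] unless [j = S v], in which case only the copy rule
    [b_j(v) <- a_j(v)] acts on it and [M(b_j(v)) = M(a_j(v))]; hence [M] satisfies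
    the VC rule. The coherence transform of [M] keeps exactly the copy rules of
    [Pi_S] whose body value is positive, and the others are harmless for
    [min(I, M)], so a model [I] of [coh(Pi, M)] yields a model [min(I, M)] of
    [Pi_S]; thus [M] is also the least model of [coh(Pi, M)]. *)

Section LeastModels.

Variables (V VP EP F : Type) (den : F -> list R -> R).
Hypothesis den01 : forall f l, (forall x, In x l -> in01 x) -> in01 (den f l).

Lemma eval_ann_in01 (th : nat -> R) :
  (forall n, in01 (th n)) -> forall a : ann F, in01 (eval_ann den th a).
Proof.
  intros Hth. fix IH 1. intros [c Hc | n | f args]; simpl; auto.
  apply den01. induction args as [|b args IHargs]; simpl; [tauto|].
  intros x [<- | Hx]; auto.
Qed.

Lemma model_gap_one (P : ggap V VP EP F) : model_gap den P (fun _ => 1).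
Proof.
  split; [intro; unfold in01; lra|].
  intros r _ th Hth _. pose proof (eval_ann_in01 th Hth (g_hann r)). unfold in01 in *; lra.
Qed.

Lemma models_inf (P : ggap V VP EP F) (X : gatom V VP EP) :
  { m | (forall I, model_gap den P I -> m <= I X) /\
        (forall c, (forall I, model_gap den P I -> c <= I X) -> c <= m) }.
Proof.
  set (E := fun z => exists I, model_gap den P I /\ z = - I X).
  assert (HE : bound E).
  { exists 0. intros z [I [[HI _] ->]]. specialize (HI X). unfold in01 in HI; lra. }
  assert (HE1 : exists z, E z) by (exists (-1), (fun _ => 1); auto using model_gap_one).
  destruct (completeness E HE HE1) as [s [Hub Hlub]].
  exists (- s). split.
  - intros I HI. assert (- I X <= s) by (apply Hub; exists I; auto). lra.
  - intros c Hc. assert (s <= - c); [|lra].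
    apply Hlub. intros z [I [HI ->]]. specialize (Hc I HI). lra.
Qed.

Lemma least_model_exists (P : ggap V VP EP F) : exists M, least_model den P M.
Proof.
  exists (fun X => proj1_sig (models_inf P X)).
  split; [split|].
  - intro X. destruct (models_inf P X) as [m [Hlow Hglb]]; simpl.
    pose proof (Hlow _ (model_gap_one P)).
    assert (0 <= m); [|unfold in01; lra].
    apply Hglb. intros I [HI _]. apply (HI X).
  - intros r Hr th Hth Hbody. apply Rle_ge.
    destruct (models_inf P (g_head r)) as [m [Hlow Hglb]]; simpl.
    apply Hglb. intros I [HI HIr]. apply Rge_le, (HIr r Hr th Hth).
    intros Am HAm. specialize (Hbody Am HAm).
    pose proof (proj1 (proj2_sig (models_inf P (fst Am))) I (conj HI HIr)).
    simpl in Hbody. lra.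
  - intros I HI X. exact (proj1 (proj2_sig (models_inf P X)) I HI).
Qed.

Lemma least_model_unique (P : ggap V VP EP F) (M1 M2 : interp V VP EP) :
  least_model den P M1 -> least_model den P M2 -> M1 = M2.
Proof.
  intros [HM1 Hl1] [HM2 Hl2]. apply functional_extensionality. intro A.
  apply Rle_antisym; auto.
Qed.

Lemma MM_least_model (P : ggap V VP EP F) : least_model den P (MM den P).
Proof.
  destruct (least_model_exists P) as [M HM].
  exact (epsilon_spec _ (least_model den P) (ex_intro _ M HM)).
Qed.

Lemma MM_eq (P : ggap V VP EP F) (M : interp V VP EP) :
  least_model den P M -> MM den P = M.
Proof. apply least_model_unique, MM_least_model. Qed.

Definition upd (M : interp V VP EP) (X : gatom V VP EP) (c : R) : interp V VP EP :=
  fun A => if excluded_middle_informative (A = X) then c else M A.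

Lemma upd_same M X c : upd M X c X = c.
Proof. unfold upd. destruct (excluded_middle_informative (X = X)); congruence. Qed.

Lemma upd_le M X c : c <= M X -> forall A, upd M X c A <= M A.
Proof.
  intros Hc A. unfold upd.
  destruct (excluded_middle_informative (A = X)) as [->|]; lra.
Qed.

(* Rules whose head is not [X] survive the update, since their bodies only get weaker. *)
Lemma least_model_upd_eq (P : ggap V VP EP F) M X c :
  least_model den P M -> 0 <= c <= M X ->
  (forall r, P r -> g_head r = X -> sat_grule den (upd M X c) r) -> M X = c.
Proof.
  intros [[HI HM] Hl] Hc HX.
  assert (Hupd : model_gap den P (upd M X c)).
  { split.
    - intro A. unfold upd. destruct (excluded_middle_informative (A = X)) as [->|]; auto.
      specialize (HI X). unfold in01 in *; lra.
    - intros r Hr. destruct (excluded_middle_informative (g_head r = X)) as [|Hne]; auto.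
      intros th Hth Hb.
      assert (M (g_head r) >= eval_ann den th (g_hann r)).
      { apply (HM r Hr th Hth). intros Am HA.
        specialize (Hb Am HA). pose proof (upd_le M X (proj2 Hc) (fst Am)). lra. }
      unfold upd. destruct (excluded_middle_informative (g_head r = X)); tauto. }
  pose proof (Hl _ Hupd X) as Hle. rewrite upd_same in Hle. lra.
Qed.

Lemma sat_grule_min (I J : interp V VP EP) (r : grule V VP EP F) :
  sat_grule den I r -> sat_grule den J r -> sat_grule den (fun A => Rmin (I A) (J A)) r.
Proof.
  intros HI HJ th Hth Hb.
  assert (I (g_head r) >= eval_ann den th (g_hann r)).
  { apply HI; auto. intros Am HA. specialize (Hb Am HA).
    pose proof (Rmin_l (I (fst Am)) (J (fst Am))). lra. }
  assert (J (g_head r) >= eval_ann den th (g_hann r)).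
  { apply HJ; auto. intros Am HA. specialize (Hb Am HA).
    pose proof (Rmin_r (I (fst Am)) (J (fst Am))). lra. }
  apply Rle_ge, Rmin_glb; lra.
Qed.

Lemma sat_copy_rule (I : interp V VP EP) (b a : VP) (v : V) :
  in01 (I (GVtx EP a v)) ->
  (sat_grule den I (copy_rule EP F b a v) <-> I (GVtx EP a v) <= I (GVtx EP b v)).
Proof.
  intros Ha. unfold sat_grule, copy_rule; simpl. split.
  - intros H. apply Rge_le, (H (fun _ => I (GVtx EP a v))); auto.
    intros Am [<- | []]; simpl; lra.
  - intros H th _ Hb. specialize (Hb _ (or_introl eq_refl)); simpl in Hb. lra.
Qed.

End LeastModels.

Lemma NoDup_map_nth_error_inj {A B} (f : A -> B) (l : list A) i j x y :
  NoDup (map f l) -> nth_error l i = Some x -> nth_error l j = Some y -> f x = f y -> i = j.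
Proof.
  intros Hn Hi Hj Hf.
  apply (proj1 (NoDup_nth_error _) Hn).
  - rewrite length_map. apply nth_error_Some. congruence.
  - rewrite !nth_error_map, Hi, Hj. simpl. congruence.
Qed.

Section InducedModel.

Variables (V VP EP F : Type) (den : F -> list R -> R).
Hypothesis den01 : forall f l, (forall x, In x l -> in01 x) -> in01 (den f l).
Variable Pi : cgap V VP EP F.
Hypothesis Hdist : NoDup (map fst (c_vc Pi)).
Hypothesis Hhead : forall r b, In r (c_rules Pi) -> In b (map fst (c_vc Pi)) ->
  atom_vpred (r_head r) <> Some b.
Variable S : V -> nat.
Hypothesis HS : is_state Pi S.

Let M := MM den (induced Pi S).

Lemma ground_rule_head_not_vc r j ba v :
  ground_rules Pi r -> nth_error (c_vc Pi) j = Some ba -> g_head r <> GVtx EP (fst ba) v.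
Proof.
  intros [r0 [s [Hr0 ->]]] Hj He.
  assert (Hb : In (fst ba) (map fst (c_vc Pi))) by exact (in_map fst _ _ (nth_error_In _ _ Hj)).
  apply (Hhead r0 Hr0 Hb).
  unfold inst_rule in He; simpl in He.
  destruct (r_head r0); simpl in *; inversion He; reflexivity.
Qed.

Lemma state_choice v : exists ba, nth_error (c_vc Pi) (S v) = Some ba.
Proof.
  destruct (nth_error (c_vc Pi) (S v)) eqn:E; eauto.
  apply nth_error_None in E. specialize (HS v). lia.
Qed.

Lemma MM_induced_least : least_model den (induced Pi S) M.
Proof. apply MM_least_model, den01. Qed.

Lemma MM_induced_in01 A : in01 (M A).
Proof. apply MM_induced_least. Qed.

Lemma MM_induced_sat r : induced Pi S r -> sat_grule den M r.
Proof. apply MM_induced_least. Qed.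

Lemma MM_induced_chosen v ba :
  nth_error (c_vc Pi) (S v) = Some ba -> M (GVtx EP (fst ba) v) = M (GVtx EP (snd ba) v).
Proof.
  intros Hba. pose proof (MM_induced_in01 (GVtx EP (snd ba) v)) as Ha.
  apply (least_model_upd_eq MM_induced_least).
  - unfold in01 in Ha. split; [lra|].
    apply (sat_copy_rule den M (fst ba) (snd ba) v Ha), MM_induced_sat.
    right; eauto.
  - intros r [Hg | [w [ba' [Hw ->]]]] Hh.
    + exfalso. eapply ground_rule_head_not_vc; eauto.
    + simpl in Hh. injection Hh as _ ->. rewrite Hba in Hw. injection Hw as <-.
      apply sat_copy_rule.
      * unfold upd. destruct (excluded_middle_informative _); auto.
      * rewrite upd_same. unfold upd. destruct (excluded_middle_informative _); lra.
Qed.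

Lemma MM_induced_unchosen v j ba :
  j <> S v -> nth_error (c_vc Pi) j = Some ba -> M (GVtx EP (fst ba) v) = 0.
Proof.
  intros Hj Hba. pose proof (MM_induced_in01 (GVtx EP (fst ba) v)).
  apply (least_model_upd_eq MM_induced_least); [unfold in01 in *; lra|].
  intros r [Hg | [w [ba' [Hw ->]]]] Hh.
  - exfalso. eapply ground_rule_head_not_vc; eauto.
  - simpl in Hh. injection Hh as Hfst ->. exfalso.
    apply Hj. eapply (NoDup_map_nth_error_inj fst); eauto.
Qed.

Lemma MM_induced_model_cgap : model_cgap den Pi M.
Proof.
  split; [exact MM_induced_in01|split].
  - intros g Hg. apply MM_induced_sat. left; auto.
  - intro v. destruct (state_choice v) as [ba Hba].
    exists (S v), ba. split; [auto|split].
    + apply MM_induced_chosen; auto.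
    + intros j ba' Hj Hj'. eapply MM_induced_unchosen; eauto.
Qed.

Lemma MM_induced_model_coh : model_gap den (coh Pi M) M.
Proof.
  split; [exact MM_induced_in01|].
  intros r [Hg | [v [i [ba [_ [_ [Heq ->]]]]]]].
  - apply MM_induced_sat. left; auto.
  - apply sat_copy_rule; [apply MM_induced_in01|]. lra.
Qed.

Lemma MM_induced_least_coh : least_model den (coh Pi M) M.
Proof.
  split; [exact MM_induced_model_coh|].
  intros I [HI HIr].
  set (J := fun A => Rmin (I A) (M A)).
  assert (HJ01 : forall A, in01 (J A)).
  { intro A. specialize (HI A). pose proof (MM_induced_in01 A). unfold J, in01 in *.
    split; [apply Rmin_glb|apply Rle_trans with (M A); [apply Rmin_r|]]; lra. }
  assert (HJ : model_gap den (induced Pi S) J).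
  { split; [exact HJ01|].
    intros r [Hg | [v [ba [Hv ->]]]].
    - apply sat_grule_min; [apply HIr; left | apply MM_induced_sat; left]; auto.
    - apply sat_copy_rule; [apply HJ01|]. unfold J.
      destruct (Rlt_le_dec 0 (M (GVtx EP (snd ba) v))) as [Hpos | Hzero].
      + (* a positive body value keeps the copy rule in [coh(Pi, M)] *)
        pose proof (@MM_induced_chosen v ba Hv) as Hch.
        assert (Hcopy : I (GVtx EP (snd ba) v) <= I (GVtx EP (fst ba) v)).
        { apply (sat_copy_rule den I (fst ba) (snd ba) v (HI _)), HIr.
          right. exists v, (S v), ba. auto. }
        rewrite Hch. apply Rle_min_compat_r; auto.
      + pose proof (HJ01 (GVtx EP (fst ba) v)). unfold J, in01 in *.
        apply Rle_trans with 0; [|lra]. apply Rle_trans with (M (GVtx EP (snd ba) v)); auto.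
        apply Rmin_r. }
  intro A. apply Rle_trans with (J A); [apply MM_induced_least, HJ | apply Rmin_l].
Qed.

End InducedModel.

Theorem mainTheorem2
  (V VP EP F : Type) (den : F -> list R -> R)
  (* the social network is finite *)
  (Vfin : exists l : list V, forall v, In v l)
  (* each annotation function symbol denotes a function into [0,1] *)
  (den01 : forall f l, (forall x, In x l -> in01 x) -> in01 (den f l))
  (Pi : cgap V VP EP F)
  (* the head predicates b_1,...,b_m of the VC rule are distinct symbols *)
  (Hdist : NoDup (map fst (c_vc Pi)))
  (* no VC-head predicate symbol is the head predicate of a GAP rule *)
  (Hhead : forall r b, In r (c_rules Pi) -> In b (map fst (c_vc Pi)) ->
             atom_vpred (r_head r) <> Some b)
  (S : V -> nat) (HS : is_state Pi S) :
  coherent_model den Pi (MM den (induced Pi S)).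
Proof.
  split.
  - apply MM_induced_model_cgap; assumption.
  - symmetry. apply MM_eq, MM_induced_least_coh; assumption.
Qed.
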